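(* In a generalised differential Seely category, for all morphisms $f:X\to Y$ and $g:X\to Z$ of $\mathscr C$, $\mathrm D(\langle f,g\rangle)=\langle\mathrm D(f),\mathrm D(g)\rangle_X;\langle f,g\rangle^*\varphi^{-1}_{Y,Z}$, where $\langle\mathrm D(f),\mathrm D(g)\rangle_X:(X,\lambda(X))\to(X,\lambda(Y)\oplus\lambda(Z))$ is the pairing in the fibre $LS(\mathscr C)_X$.
   Context: Composition is diagrammatic; monoidal categories are strict. Setting: an LNL adjunction $\mathcal F\dashv\mathcal U$, $\mathcal F:\mathscr C\to\mathcal L$, between cartesian $(\mathscr C,\times,I)$ and symmetric monoidal $(\mathcal L,\otimes,1)$; $\mathcal U$ lax monoidal via $n_{A,B}$; $\mathcal F$ strong monoidal via isomorphisms $m_{X,Y}:\mathcal F(X)\otimes\mathcal F(Y)\to\mathcal F(X\times Y)$, $m_1$; unit $\eta$; $\mathbf c_X:=\mathcal F(\Delta_X);m_{X,X}^{-1}$, $\mathbf w_X:=\mathcal F(t_X);m_1^{-1}$. $LS(\mathscr C)$: objects $(X,A)$; morphisms $(f,u):(X,A)\to(Y,B)$ with $f:X\to Y$, $u:\mathcal F(X)\otimes A\to B$; composition $(f,u);(g,v)=(f;g,(\mathbf c_X\otimes\mathrm{id}_A);(\mathcal F(f)\otimes u);v)$; identity $(\mathrm{id}_X,\mathbf w_X\otimes\mathrm{id}_A)$; $\mathbf{ls}(f,u)=f$; fibre $LS(\mathscr C)_X$ = morphisms $(\mathrm{id}_X,u)$; reindexing along $h:X\to Y$: $h^*(Y,B)=(X,B)$,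 $h^*(\mathrm{id}_Y,v)=(\mathrm{id}_X,(\mathcal F(h)\otimes\mathrm{id}_B);v)$. When $\mathcal L$ has biproducts $\oplus$, each fibre has biproducts $(X,A)\oplus_X(X,B)=(X,A\oplus B)$ (pairing $\langle(\mathrm{id}_X,u),(\mathrm{id}_X,v)\rangle_X=(\mathrm{id}_X,\langle u,v\rangle)$, injections $\iota^X_i=(\mathrm{id}_X,\mathbf w_X\otimes\iota_i)$) and $LS(\mathscr C)$ has products $(X\times Y,A\oplus B)$ with projections $(\pi_i,\mathbf w_{X\times Y}\otimes\pi_i)$. GDSC: $\mathcal L$ additive (CMon-enriched, $\otimes$ bilinear) with finite products, and a functor $\mathcal T:\mathscr C\to LS(\mathscr C)$ with: (t.1) $\mathbf{ls}\circ\mathcal T=\mathrm{id}$, so $\mathcal T(X)=(X,\lambda(X))$, and $\varphi_{X,Y}:=\langle\mathcal T(\pi_1),\mathcal T(\pi_2)\rangle:\mathcal T(X\times Y)\to(X\times Y,\lambda(X)\oplus\lambda(Y))$ is an isomorphism (it is vertical); (t.2) $\mathcal T(\mathcal U(A))=(\mathcal U(A),A)$; (t.3) with $i^{X,Y}_2:=\iota^{X\times Y}_2;\varphi^{-1}_{X,Y}$, $⦃(f,u)⦄:=\langle\pi_1;f,(\eta_X\times\mathrm{id});n_{\mathcal F(X),A};\mathcal U(u)\rangle$, $W(f,u):=(⦃(f,u)⦄,(\mathcal F(\pi_1)\otimes\mathrm{id}_A);u)$: $W(f,u);i^{Y,\mathcal U(B)}_2=i^{X,\mathcal U(A)}_2;\mathcal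 T(⦃(f,u)⦄)$. Differential: for $f:X\to Y$ with $\mathcal T(f)=(f,u)$, $\mathrm D(f):=(\mathrm{id}_X,u):(X,\lambda(X))\to(X,\lambda(Y))$. *)

(* an elementary, self-contained
   formalisation of the categorical setting (one-sorted categories, so that
   the strictness of the monoidal structure is expressible as equalities of
   objects). Composition is written diagrammatically: [comp f g] = f;g. *)
Set Implicit Arguments.
Unset Strict Implicit.

Record Cat := {
  ob : Type; mor : Type;
  dom : mor -> ob; cod : mor -> ob;
  idm : ob -> mor;
  comp : mor -> mor -> mor;
  dom_idm : forall A, dom (idm A) = A;
  cod_idm : forall A, cod (idm A) = A;
  dom_comp : forall f g, cod f = dom g -> dom (comp f g) = dom f;
  cod_comp : forall f g, cod f = dom g -> cod (comp f g) = cod g;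
  comp_idl : forall f, comp (idm (dom f)) f = f;
  comp_idr : forall f, comp f (idm (cod f)) = f;
  comp_assoc : forall f g h, cod f = dom g -> cod g = dom h ->
      comp (comp f g) h = comp f (comp g h)
}.
Arguments dom {c} _. Arguments cod {c} _. Arguments idm {c} _.
Arguments comp {c} _ _.

Definition hom (C : Cat) (f : mor C) (A B : ob C) := dom f = A /\ cod f = B.

Record cartesian (C : Cat) := {
  prd : ob C -> ob C -> ob C;
  pr1 : ob C -> ob C -> mor C;
  pr2 : ob C -> ob C -> mor C;
  pairing : mor C -> mor C -> mor C;
  trm : ob C;
  bang : ob C -> mor C;
  pr1_hom : forall X Y, hom (pr1 X Y) (prd X Y) X;
  pr2_hom : forall X Y, hom (pr2 X Y) (prd X Y) Y;
  pairing_hom : forall f g, dom f = dom g ->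
      hom (pairing f g) (dom f) (prd (cod f) (cod g));
  pairing_pr1 : forall f g, dom f = dom g ->
      comp (pairing f g) (pr1 (cod f) (cod g)) = f;
  pairing_pr2 : forall f g, dom f = dom g ->
      comp (pairing f g) (pr2 (cod f) (cod g)) = g;
  pairing_eta : forall h X Y, cod h = prd X Y ->
      pairing (comp h (pr1 X Y)) (comp h (pr2 X Y)) = h;
  bang_hom : forall X, hom (bang X) X trm;
  bang_uniq : forall h, cod h = trm -> h = bang (dom h)
}.

Section CartDefs.
Variables (C : Cat) (K : cartesian C).
Definition diag (X : ob C) : mor C := pairing K (idm X) (idm X).
Definition prodm (f g : mor C) : mor C :=
  pairing K (comp (pr1 K (dom f) (dom g)) f) (comp (pr2 K (dom f) (dom g)) g).
Definition assocC (X Y Z : ob C) : mor C :=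
  pairing K (comp (pr1 K (prd K X Y) Z) (pr1 K X Y))
            (pairing K (comp (pr1 K (prd K X Y) Z) (pr2 K X Y)) (pr2 K (prd K X Y) Z)).
Definition swapC (X Y : ob C) : mor C := pairing K (pr2 K X Y) (pr1 K X Y).
End CartDefs.

Record addsmc (L : Cat) := {
  tns : ob L -> ob L -> ob L;
  tnsm : mor L -> mor L -> mor L;
  one : ob L;
  sym : ob L -> ob L -> mor L;
  tnsm_dom : forall f g, dom (tnsm f g) = tns (dom f) (dom g);
  tnsm_cod : forall f g, cod (tnsm f g) = tns (cod f) (cod g);
  tnsm_id : forall A B, tnsm (idm A) (idm B) = idm (tns A B);
  tnsm_comp : forall f f' g g', cod f = dom f' -> cod g = dom g' ->
      tnsm (comp f f') (comp g g') = comp (tnsm f g) (tnsm f' g');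
  tns_assoc : forall A B C, tns (tns A B) C = tns A (tns B C);
  tnsm_assoc : forall f g h, tnsm (tnsm f g) h = tnsm f (tnsm g h);
  tns_onel : forall A, tns one A = A;
  tns_oner : forall A, tns A one = A;
  tnsm_onel : forall f, tnsm (idm one) f = f;
  tnsm_oner : forall f, tnsm f (idm one) = f;
  sym_hom : forall A B, hom (sym A B) (tns A B) (tns B A);
  sym_nat : forall f g,
      comp (tnsm f g) (sym (cod f) (cod g)) = comp (sym (dom f) (dom g)) (tnsm g f);
  sym_inv : forall A B, comp (sym A B) (sym B A) = idm (tns A B);
  sym_hex : forall A B C,
      sym A (tns B C) = comp (tnsm (sym A B) (idm C)) (tnsm (idm B) (sym A C));
  zro : ob L -> ob L -> mor L;
  add : mor L -> mor L -> mor L;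
  zro_hom : forall A B, hom (zro A B) A B;
  add_hom : forall f g A B, hom f A B -> hom g A B -> hom (add f g) A B;
  addA : forall f g h A B, hom f A B -> hom g A B -> hom h A B ->
      add (add f g) h = add f (add g h);
  addC : forall f g A B, hom f A B -> hom g A B -> add f g = add g f;
  add0 : forall f A B, hom f A B -> add (zro A B) f = f;
  comp_addl : forall f g h A B C, hom f A B -> hom g A B -> hom h B C ->
      comp (add f g) h = add (comp f h) (comp g h);
  comp_addr : forall f g h A B C, hom f A B -> hom g B C -> hom h B C ->
      comp f (add g h) = add (comp f g) (comp f h);
  comp_zrol : forall h A B C, hom h B C -> comp (zro A B) h = zro A C;
  comp_zror : forall f A B C, hom f A B -> comp f (zro B C) = zro A C;
  tnsm_addl : forall f g h A B, hom f A B -> hom g A B ->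
      tnsm (add f g) h = add (tnsm f h) (tnsm g h);
  tnsm_addr : forall f g h A B, hom g A B -> hom h A B ->
      tnsm f (add g h) = add (tnsm f g) (tnsm f h);
  tnsm_zrol : forall A B h, tnsm (zro A B) h = zro (tns A (dom h)) (tns B (cod h));
  tnsm_zror : forall f A B, tnsm f (zro A B) = zro (tns (dom f) A) (tns (cod f) B);
  (* finite products (hence biproducts) *)
  bsum : ob L -> ob L -> ob L;
  bp1 : ob L -> ob L -> mor L;
  bp2 : ob L -> ob L -> mor L;
  bpair : mor L -> mor L -> mor L;
  zob : ob L;
  bp1_hom : forall A B, hom (bp1 A B) (bsum A B) A;
  bp2_hom : forall A B, hom (bp2 A B) (bsum A B) B;
  bpair_hom : forall u v, dom u = dom v ->
      hom (bpair u v) (dom u) (bsum (cod u) (cod v));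
  bpair_p1 : forall u v, dom u = dom v -> comp (bpair u v) (bp1 (cod u) (cod v)) = u;
  bpair_p2 : forall u v, dom u = dom v -> comp (bpair u v) (bp2 (cod u) (cod v)) = v;
  bpair_eta : forall h A B, cod h = bsum A B ->
      bpair (comp h (bp1 A B)) (comp h (bp2 A B)) = h;
  zob_term : forall h, cod h = zob -> h = zro (dom h) zob
}.

Definition inj1 (L : Cat) (M : addsmc L) (A B : ob L) : mor L :=
  bpair M (idm A) (zro M A B).
Definition inj2 (L : Cat) (M : addsmc L) (A B : ob L) : mor L :=
  bpair M (zro M B A) (idm B).

Record functor (C D : Cat) := {
  fob : ob C -> ob D;
  fmor : mor C -> mor D;
  fmor_dom : forall f, dom (fmor f) = fob (dom f);
  fmor_cod : forall f, cod (fmor f) = fob (cod f);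
  fmor_id : forall X, fmor (idm X) = idm (fob X);
  fmor_comp : forall f g, cod f = dom g -> fmor (comp f g) = comp (fmor f) (fmor g)
}.

Record lnl := {
  Cc : Cat; Cx : cartesian Cc;
  Lc : Cat; Lx : addsmc Lc;
  Ff : functor Cc Lc; Uf : functor Lc Cc;
  mm : ob Cc -> ob Cc -> mor Lc;
  mminv : ob Cc -> ob Cc -> mor Lc;
  m1 : mor Lc;
  m1inv : mor Lc;
  mm_hom : forall X Y, hom (mm X Y) (tns Lx (fob Ff X) (fob Ff Y)) (fob Ff (prd Cx X Y));
  mminv_hom : forall X Y, hom (mminv X Y) (fob Ff (prd Cx X Y)) (tns Lx (fob Ff X) (fob Ff Y));
  mm_iso1 : forall X Y, comp (mm X Y) (mminv X Y) = idm (tns Lx (fob Ff X) (fob Ff Y));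
  mm_iso2 : forall X Y, comp (mminv X Y) (mm X Y) = idm (fob Ff (prd Cx X Y));
  m1_hom : hom m1 (one Lx) (fob Ff (trm Cx));
  m1inv_hom : hom m1inv (fob Ff (trm Cx)) (one Lx);
  m1_iso1 : comp m1 m1inv = idm (one Lx);
  m1_iso2 : comp m1inv m1 = idm (fob Ff (trm Cx));
  mm_nat : forall f g,
      comp (tnsm Lx (fmor Ff f) (fmor Ff g)) (mm (cod f) (cod g))
      = comp (mm (dom f) (dom g)) (fmor Ff (prodm Cx f g));
  mm_assoc : forall X Y Z,
      comp (comp (tnsm Lx (mm X Y) (idm (fob Ff Z))) (mm (prd Cx X Y) Z))
           (fmor Ff (assocC Cx X Y Z))
      = comp (tnsm Lx (idm (fob Ff X)) (mm Y Z)) (mm X (prd Cx Y Z));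
  mm_unitl : forall X,
      comp (comp (tnsm Lx m1 (idm (fob Ff X))) (mm (trm Cx) X)) (fmor Ff (pr2 Cx (trm Cx) X))
      = idm (fob Ff X);
  mm_unitr : forall X,
      comp (comp (tnsm Lx (idm (fob Ff X)) m1) (mm X (trm Cx))) (fmor Ff (pr1 Cx X (trm Cx)))
      = idm (fob Ff X);
  mm_sym : forall X Y,
      comp (mm X Y) (fmor Ff (swapC Cx X Y)) = comp (sym Lx (fob Ff X) (fob Ff Y)) (mm Y X);
  eta : ob Cc -> mor Cc;
  eps : ob Lc -> mor Lc;
  eta_hom : forall X, hom (eta X) X (fob Uf (fob Ff X));
  eps_hom : forall A, hom (eps A) (fob Ff (fob Uf A)) A;
  eta_nat : forall f, comp f (eta (cod f)) = comp (eta (dom f)) (fmor Uf (fmor Ff f));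
  eps_nat : forall u, comp (fmor Ff (fmor Uf u)) (eps (cod u)) = comp (eps (dom u)) u;
  tri1 : forall X, comp (fmor Ff (eta X)) (eps (fob Ff X)) = idm (fob Ff X);
  tri2 : forall A, comp (eta (fob Uf A)) (fmor Uf (eps A)) = idm (fob Uf A)
}.

Arguments mm : clear implicits. Arguments mminv : clear implicits.
Arguments m1 : clear implicits. Arguments m1inv : clear implicits.
Arguments eta : clear implicits. Arguments eps : clear implicits.

Section LNLDefs.
Local Unset Implicit Arguments.
Variable L : lnl.
Notation F := (fob (Ff L)).
Notation Fm := (fmor (Ff L)).
Notation U := (fob (Uf L)).
Notation Um := (fmor (Uf L)).

(* lax monoidal structure of U induced by the (monoidal) adjunction:
   n_{A,B} = eta ; U(m^{-1} ; (eps (x) eps)) : UA x UB -> U(A (x) B) *)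
Definition nn (A B : ob (Lc L)) : mor (Cc L) :=
  comp (eta L (prd (Cx L) (U A) (U B)))
       (Um (comp (mminv L (U A) (U B)) (tnsm (Lx L) (eps L A) (eps L B)))).

Definition cmul (X : ob (Cc L)) : mor (Lc L) :=
  comp (Fm (diag (Cx L) X)) (mminv L X X).
Definition wk (X : ob (Cc L)) : mor (Lc L) :=
  comp (Fm (bang (Cx L) X)) (m1inv L).

(* LS(C): a morphism (X,A) -> (Y,B) is a pair (f,u) *)
Definition lsmor := (mor (Cc L) * mor (Lc L))%type.
Definition lshom (p : lsmor) (X : ob (Cc L)) (A : ob (Lc L)) (Y : ob (Cc L)) (B : ob (Lc L)) :=
  hom (fst p) X Y /\ hom (snd p) (tns (Lx L) (F X) A) B.
Definition lsid (X : ob (Cc L)) (A : ob (Lc L)) : lsmor :=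
  (idm X, tnsm (Lx L) (wk X) (idm A)).
(* composition of p : (X,A) -> (Y,B) with q; A is the fibre part of the source *)
Definition lscomp (A : ob (Lc L)) (p q : lsmor) : lsmor :=
  (comp (fst p) (fst q),
   comp (comp (tnsm (Lx L) (cmul (dom (fst p))) (idm A))
              (tnsm (Lx L) (Fm (fst p)) (snd p)))
        (snd q)).
Definition lspair (p q : lsmor) : lsmor :=
  (pairing (Cx L) (fst p) (fst q), bpair (Lx L) (snd p) (snd q)).
Definition fpair (X : ob (Cc L)) (p q : lsmor) : lsmor :=
  (idm X, bpair (Lx L) (snd p) (snd q)).
Definition finj2 (X : ob (Cc L)) (A B : ob (Lc L)) : lsmor :=
  (idm X, tnsm (Lx L) (wk X) (inj2 (Lx L) A B)).
(* reindexing h^* of a vertical morphism p over cod h, with fibre source B *)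
Definition reindex (h : mor (Cc L)) (B : ob (Lc L)) (p : lsmor) : lsmor :=
  (idm (dom h), comp (tnsm (Lx L) (Fm h) (idm B)) (snd p)).
Definition brk (X : ob (Cc L)) (A : ob (Lc L)) (f : mor (Cc L)) (u : mor (Lc L)) : mor (Cc L) :=
  pairing (Cx L) (comp (pr1 (Cx L) X (U A)) f)
    (comp (comp (prodm (Cx L) (eta L X) (idm (U A))) (nn (F X) A)) (Um u)).
Definition Wmor (X : ob (Cc L)) (A : ob (Lc L)) (f : mor (Cc L)) (u : mor (Lc L)) : lsmor :=
  (brk X A f u, comp (tnsm (Lx L) (Fm (pr1 (Cx L) X (U A))) (idm A)) u).
End LNLDefs.

(* Generalised differential Seely category structure on an LNL adjunction.
   T(X) = (X, lam X), T(f) = (f, tau f). *)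
Record gdsc (L : lnl) := {
  lam : ob (Cc L) -> ob (Lc L);
  tau : mor (Cc L) -> mor (Lc L);
  tau_hom : forall f, hom (tau f) (tns (Lx L) (fob (Ff L) (dom f)) (lam (dom f))) (lam (cod f));
  tau_id : forall X, tau (idm X) = snd (lsid L X (lam X));
  tau_comp : forall f g, cod f = dom g ->
      tau (comp f g) = snd (lscomp L (lam (dom f)) (f, tau f) (g, tau g));
  (* (t.1): phi_{X,Y} = <T pi1, T pi2> is an isomorphism, with inverse phiinv *)
  phiinv : ob (Cc L) -> ob (Cc L) -> lsmor L;
  phiinv_hom : forall X Y, lshom L (phiinv X Y) (prd (Cx L) X Y) (bsum (Lx L) (lam X) (lam Y))
                                     (prd (Cx L) X Y) (lam (prd (Cx L) X Y));
  phi_iso1 : forall X Y,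
      lscomp L (lam (prd (Cx L) X Y))
        (lspair L (pr1 (Cx L) X Y, tau (pr1 (Cx L) X Y)) (pr2 (Cx L) X Y, tau (pr2 (Cx L) X Y)))
        (phiinv X Y)
      = lsid L (prd (Cx L) X Y) (lam (prd (Cx L) X Y));
  phi_iso2 : forall X Y,
      lscomp L (bsum (Lx L) (lam X) (lam Y)) (phiinv X Y)
        (lspair L (pr1 (Cx L) X Y, tau (pr1 (Cx L) X Y)) (pr2 (Cx L) X Y, tau (pr2 (Cx L) X Y)))
      = lsid L (prd (Cx L) X Y) (bsum (Lx L) (lam X) (lam Y));
  lam_U : forall A, lam (fob (Uf L) A) = A;
  (* (t.3), with i_2^{X,Y} = iota^{X x Y}_2 ; phi^{-1}_{X,Y} *)
  t3 : forall (X : ob (Cc L)) (A : ob (Lc L)) (Y : ob (Cc L)) (B : ob (Lc L)) f u,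
      lshom L (f, u) X A Y B ->
      lscomp L A (Wmor L X A f u)
        (lscomp L (lam (fob (Uf L) B))
           (finj2 L (prd (Cx L) Y (fob (Uf L) B)) (lam Y) (lam (fob (Uf L) B)))
           (phiinv Y (fob (Uf L) B)))
      = lscomp L (lam (fob (Uf L) A))
          (lscomp L (lam (fob (Uf L) A))
             (finj2 L (prd (Cx L) X (fob (Uf L) A)) (lam X) (lam (fob (Uf L) A)))
             (phiinv X (fob (Uf L) A)))
          (brk L X A f u, tau (brk L X A f u))
}.

Definition Dmor (L : lnl) (G : gdsc L) (f : mor (Cc L)) : lsmor L :=
  (idm (dom f), tau G f).

(* LS(C) is a category: composition is associative because the comonoid
   c_X = F(Δ_X); m⁻¹ is coassociative and natural, and (id, w_Y ⊗ id) is a right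
   unit by the counit law c_X; (w_X ⊗ id) = id.  As T is a functor,
   T h; φ = ⟨T(h;π₁), T(h;π₂)⟩ for every h : X → Y × Z, so φ; φ⁻¹ = id yields
   T h = ⟨T(h;π₁), T(h;π₂)⟩; φ⁻¹.  For h = ⟨f,g⟩ this reads
   T⟨f,g⟩ = (⟨f,g⟩, ⟨τ f, τ g⟩); φ⁻¹, and a vertical map followed by a reindexed
   one, (id, u); h^* v, has the same fibre part as (h, u); v. *)

From Stdlib Require Import Setoid.

Set Implicit Arguments.

Lemma hom_id (C : Cat) (A : ob C) : hom (idm A) A A.
Proof. split; [apply dom_idm | apply cod_idm]. Qed.

Lemma hom_comp (C : Cat) (f g : mor C) A B B' D :
  hom f A B -> hom g B' D -> B = B' -> hom (comp f g) A D.
Proof.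
  intros [Hf1 Hf2] [Hg1 Hg2] E; subst.
  split; [rewrite dom_comp | rewrite cod_comp]; congruence.
Qed.

Lemma hom_cod_dom (C : Cat) (f g : mor C) A B B' D :
  hom f A B -> hom g B' D -> B = B' -> cod f = dom g.
Proof. intros [_ Hf] [Hg _] E; congruence. Qed.

Lemma comp_idl_hom (C : Cat) (f : mor C) A B : hom f A B -> comp (idm A) f = f.
Proof. intros [Hf _]; subst; apply comp_idl. Qed.

Lemma comp_idr_hom (C : Cat) (f : mor C) A B : hom f A B -> comp f (idm B) = f.
Proof. intros [_ Hf]; subst; apply comp_idr. Qed.

Lemma hom_fmor (C D : Cat) (F : functor C D) f A B :
  hom f A B -> hom (fmor F f) (fob F A) (fob F B).
Proof. intros [Hf1 Hf2]; split; [rewrite fmor_dom | rewrite fmor_cod]; congruence. Qed.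

Lemma hom_tnsm (C : Cat) (M : addsmc C) f g A B A' B' :
  hom f A B -> hom g A' B' -> hom (tnsm M f g) (tns M A A') (tns M B B').
Proof. intros [Hf1 Hf2] [Hg1 Hg2]; split; [rewrite tnsm_dom | rewrite tnsm_cod]; congruence. Qed.

Lemma hom_pairing (C : Cat) (K : cartesian C) f g A B D :
  hom f A B -> hom g A D -> hom (pairing K f g) A (prd K B D).
Proof.
  intros [Hf1 Hf2] [Hg1 Hg2].
  destruct (pairing_hom K (f := f) (g := g)) as [E1 E2]; [congruence | split; congruence].
Qed.

Lemma hom_bpair (C : Cat) (M : addsmc C) u v A B D :
  hom u A B -> hom v A D -> hom (bpair M u v) A (bsum M B D).
Proof.
  intros [Hu1 Hu2] [Hv1 Hv2].
  destruct (bpair_hom M (u := u) (v := v)) as [E1 E2]; [congruence | split; congruence].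
Qed.

Lemma hom_diag (C : Cat) (K : cartesian C) X : hom (diag K X) X (prd K X X).
Proof. apply hom_pairing; apply hom_id. Qed.

Create HintDb hom.
#[export] Hint Resolve hom_id hom_comp hom_fmor hom_tnsm hom_pairing hom_bpair hom_diag
  pr1_hom pr2_hom bang_hom bp1_hom bp2_hom mm_hom mminv_hom m1_hom m1inv_hom : hom.
(* ⊗ is strict, so the middle objects in [hom_comp] are matched up to its
   associativity and unit equations. *)
#[export] Hint Extern 1 (@eq (ob _) _ _) =>
  repeat rewrite ?tns_assoc, ?tns_onel, ?tns_oner; reflexivity : hom.

Ltac homs := solve [eauto 40 with hom].
Ltac cods := first [ reflexivity | eapply hom_cod_dom; [homs | homs | solve [eauto with hom]] ].

Lemma hom_prodm (C : Cat) (K : cartesian C) f g A B A' B' :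
  hom f A B -> hom g A' B' -> hom (prodm K f g) (prd K A A') (prd K B B').
Proof. intros Hf Hg; unfold prodm; rewrite (proj1 Hf), (proj1 Hg); homs. Qed.

Lemma hom_assocC (C : Cat) (K : cartesian C) X Y Z :
  hom (assocC K X Y Z) (prd K (prd K X Y) Z) (prd K X (prd K Y Z)).
Proof. unfold assocC; homs. Qed.

#[export] Hint Resolve hom_prodm hom_assocC : hom.

Section Cartesian.
Variables (C : Cat) (K : cartesian C).

Lemma pairing_pr1_hom f g A B D : hom f A B -> hom g A D -> comp (pairing K f g) (pr1 K B D) = f.
Proof. intros [? ?] [? ?]; subst; apply pairing_pr1; congruence. Qed.

Lemma pairing_pr2_hom f g A B D : hom f A B -> hom g A D -> comp (pairing K f g) (pr2 K B D) = g.
Proof. intros [? ?] [? ?]; subst; apply pairing_pr2; congruence. Qed.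

Lemma comp_pairing k f g A B D E :
  hom k E A -> hom f A B -> hom g A D ->
  comp k (pairing K f g) = pairing K (comp k f) (comp k g).
Proof.
  intros Hk Hf Hg.
  assert (Hc : cod (comp k (pairing K f g)) = prd K B D)
    by apply (proj2 (hom_comp Hk (hom_pairing K Hf Hg) eq_refl)).
  rewrite <- (pairing_eta Hc), !comp_assoc by cods.
  rewrite (pairing_pr1_hom Hf Hg), (pairing_pr2_hom Hf Hg); reflexivity.
Qed.

Lemma pairing_prodm a b u v E A A' B B' :
  hom a E A -> hom b E A' -> hom u A B -> hom v A' B' ->
  comp (pairing K a b) (prodm K u v) = pairing K (comp a u) (comp b v).
Proof.
  intros Ha Hb Hu Hv; unfold prodm.
  rewrite (proj1 Hu), (proj1 Hv).
  rewrite (comp_pairing (A := prd K A A') (B := B) (D := B') (E := E)) by homs.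
  rewrite <- !comp_assoc by cods.
  rewrite (pairing_pr1_hom Ha Hb), (pairing_pr2_hom Ha Hb); reflexivity.
Qed.

Lemma comp_diag h X W : hom h X W -> comp h (diag K W) = pairing K h h.
Proof.
  intros Hh; unfold diag; erewrite (comp_pairing (A := W)) by homs.
  rewrite (comp_idr_hom Hh); reflexivity.
Qed.

Lemma diag_prodm h X W : hom h X W -> comp (diag K X) (prodm K h h) = pairing K h h.
Proof.
  intros Hh; unfold diag; erewrite (pairing_prodm (E := X)) by homs.
  rewrite (comp_idl_hom Hh); reflexivity.
Qed.

Lemma diag_bang_pr2 X :
  comp (comp (diag K X) (prodm K (bang K X) (idm X))) (pr2 K (trm K) X) = idm X.
Proof.
  unfold diag; erewrite (pairing_prodm (E := X)) by homs.
  rewrite (comp_idl_hom (bang_hom K X)), (comp_idl_hom (hom_id _ X)).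
  apply (pairing_pr2_hom (A := X)); homs.
Qed.

Lemma diag_coassoc X :
  comp (comp (diag K X) (prodm K (diag K X) (idm X))) (assocC K X X X)
  = comp (diag K X) (prodm K (idm X) (diag K X)).
Proof.
  assert (Hd := hom_diag K X); assert (Hi := hom_id C X).
  unfold diag at 1 3; erewrite !(pairing_prodm (E := X)) by homs; fold (diag K X).
  rewrite (comp_idl_hom Hd), (comp_idl_hom Hi).
  unfold assocC.
  erewrite (comp_pairing (A := prd K (prd K X X) X) (B := X) (D := prd K X X)) by homs.
  erewrite (comp_pairing (A := prd K (prd K X X) X) (B := X) (D := X)) by homs.
  rewrite <- !comp_assoc by cods.
  rewrite (pairing_pr1_hom Hd Hi), (pairing_pr2_hom Hd Hi).
  unfold diag; rewrite (pairing_pr1_hom Hi Hi), (pairing_pr2_hom Hi Hi); reflexivity.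
Qed.
End Cartesian.

Lemma comp_bpair (C : Cat) (M : addsmc C) k u v A B D E :
  hom k E A -> hom u A B -> hom v A D ->
  comp k (bpair M u v) = bpair M (comp k u) (comp k v).
Proof.
  intros Hk Hu Hv.
  assert (Hc : cod (comp k (bpair M u v)) = bsum M B D)
    by apply (proj2 (hom_comp Hk (hom_bpair M Hu Hv) eq_refl)).
  rewrite <- (bpair_eta Hc), !comp_assoc by cods.
  destruct Hu as [? <-], Hv as [? <-].
  rewrite bpair_p1, bpair_p2 by congruence; reflexivity.
Qed.

Lemma tnsm_comp_idr (C : Cat) (M : addsmc C) f f' A :
  cod f = dom f' -> tnsm M (comp f f') (idm A) = comp (tnsm M f (idm A)) (tnsm M f' (idm A)).
Proof.
  intros E; rewrite <- tnsm_comp by (rewrite ?cod_idm, ?dom_idm; auto).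
  rewrite (comp_idl_hom (hom_id C A)); reflexivity.
Qed.

Lemma iso_commute_inv (C : Cat) (a b m m' mi mi' : mor C) A B A' B' :
  hom a A B -> hom b A' B' -> hom m A A' -> hom m' B B' -> hom mi A' A -> hom mi' B' B ->
  comp mi m = idm A' -> comp m' mi' = idm B -> comp a m' = comp m b ->
  comp b mi' = comp mi a.
Proof.
  intros Ha Hb Hm Hm' Hmi Hmi' Em Em' E.
  rewrite <- (comp_idr_hom Ha), <- Em', <- (comp_assoc (f := a)), E by cods.
  rewrite <- !comp_assoc, Em, (comp_idl_hom Hb) by cods; reflexivity.
Qed.

Section Lnl.
Variable L : lnl.
Local Notation F := (fob (Ff L)).
Local Notation Fm := (fmor (Ff L)).
Local Notation K := (Cx L).
Local Notation "f ⊗ g" := (tnsm (Lx L) f g) (at level 40, left associativity).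

Lemma hom_cmul X : hom (cmul L X) (F X) (tns (Lx L) (F X) (F X)).
Proof. unfold cmul; homs. Qed.

Lemma hom_wk X : hom (wk L X) (F X) (one (Lx L)).
Proof. unfold wk; homs. Qed.

#[local] Hint Resolve hom_cmul hom_wk : hom.

Lemma mminv_nat f g X X' Y Y' : hom f X X' -> hom g Y Y' ->
  comp (mminv L X Y) (Fm f ⊗ Fm g) = comp (Fm (prodm K f g)) (mminv L X' Y').
Proof.
  intros Hf Hg; symmetry.
  apply (iso_commute_inv (m := mm L X Y) (m' := mm L X' Y')
           (A := tns (Lx L) (F X) (F Y)) (B := tns (Lx L) (F X') (F Y'))
           (A' := F (prd K X Y)) (B' := F (prd K X' Y'))); try homs;
    try apply mm_iso1; try apply mm_iso2.
  destruct Hf as [<- <-], Hg as [<- <-]; apply mm_nat.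
Qed.

Lemma wk_nat h X W : hom h X W -> comp (Fm h) (wk L W) = wk L X.
Proof.
  intros Hh; unfold wk; rewrite <- comp_assoc, <- fmor_comp by cods.
  destruct (hom_comp Hh (bang_hom K W) eq_refl) as [Hd Hc].
  rewrite (bang_uniq Hc), Hd; reflexivity.
Qed.

Lemma cmul_nat h X W : hom h X W ->
  comp (Fm h) (cmul L W) = comp (cmul L X) (Fm h ⊗ Fm h).
Proof.
  intros Hh; unfold cmul.
  rewrite <- comp_assoc, <- fmor_comp, (comp_diag _ Hh), <- (diag_prodm _ Hh), fmor_comp by cods.
  rewrite !comp_assoc, (mminv_nat Hh Hh) by cods; reflexivity.
Qed.

Lemma m1inv_unitl X :
  comp (mminv L (trm K) X) (m1inv L ⊗ idm (F X)) = Fm (pr2 K (trm K) X).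
Proof.
  assert (Hm1 : hom (m1 L ⊗ idm (F X)) (F X) (tns (Lx L) (F (trm K)) (F X))).
  { generalize (hom_tnsm (Lx L) (m1_hom L) (hom_id _ (F X))); rewrite tns_onel; trivial. }
  assert (Hm1inv : hom (m1inv L ⊗ idm (F X)) (tns (Lx L) (F (trm K)) (F X)) (F X)).
  { generalize (hom_tnsm (Lx L) (m1inv_hom L) (hom_id _ (F X))); rewrite tns_onel; trivial. }
  assert (Hiso : comp (m1inv L ⊗ idm (F X)) (m1 L ⊗ idm (F X))
                 = idm (tns (Lx L) (F (trm K)) (F X))).
  { rewrite <- tnsm_comp, m1_iso2, (comp_idl_hom (hom_id _ _)), tnsm_id by cods; reflexivity. }
  transitivity (comp (mminv L (trm K) X) (comp (m1inv L ⊗ idm (F X))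
    (comp (comp (m1 L ⊗ idm (F X)) (mm L (trm K) X)) (Fm (pr2 K (trm K) X))))).
  { rewrite (mm_unitl X), (comp_idr_hom Hm1inv); reflexivity. }
  rewrite <- !comp_assoc, (comp_assoc (f := mminv L (trm K) X)), Hiso by cods.
  rewrite (comp_idr_hom (mminv_hom _ _)), mm_iso2.
  apply (comp_idl_hom (hom_fmor _ (pr2_hom K _ _))).
Qed.

Lemma cmul_counit X : comp (cmul L X) (wk L X ⊗ idm (F X)) = idm (F X).
Proof.
  unfold cmul, wk.
  assert (Hsplit : comp (Fm (bang K X)) (m1inv L) ⊗ idm (F X)
                   = comp (Fm (bang K X) ⊗ Fm (idm X)) (m1inv L ⊗ idm (F X))).
  { rewrite <- tnsm_comp, fmor_id, (comp_idl_hom (hom_id _ _)) by cods; reflexivity. }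
  rewrite Hsplit, !comp_assoc, <- (comp_assoc (f := mminv L X X)) by cods.
  rewrite (mminv_nat (bang_hom K X) (hom_id _ X)), !comp_assoc, m1inv_unitl by cods.
  rewrite <- !fmor_comp, <- comp_assoc, diag_bang_pr2 by cods; apply fmor_id.
Qed.

Lemma mminv_assoc X Y Z :
  comp (mminv L (prd K X Y) Z) (mminv L X Y ⊗ idm (F Z))
  = comp (Fm (assocC K X Y Z)) (comp (mminv L X (prd K Y Z)) (idm (F X) ⊗ mminv L Y Z)).
Proof.
  set (FXYZ := tns (Lx L) (F X) (tns (Lx L) (F Y) (F Z))).
  assert (Hu : hom (comp (mm L X Y ⊗ idm (F Z)) (mm L (prd K X Y) Z))
                   FXYZ (F (prd K (prd K X Y) Z))).
  { unfold FXYZ; rewrite <- tns_assoc; homs. }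
  assert (Hu' : hom (comp (mminv L (prd K X Y) Z) (mminv L X Y ⊗ idm (F Z)))
                    (F (prd K (prd K X Y) Z)) FXYZ).
  { unfold FXYZ; rewrite <- tns_assoc; homs. }
  assert (Hv : hom (comp (idm (F X) ⊗ mm L Y Z) (mm L X (prd K Y Z)))
                   FXYZ (F (prd K X (prd K Y Z)))) by homs.
  assert (Hv' : hom (comp (mminv L X (prd K Y Z)) (idm (F X) ⊗ mminv L Y Z))
                    (F (prd K X (prd K Y Z))) FXYZ) by homs.
  rewrite <- (comp_idr_hom Hu').
  symmetry; apply (iso_commute_inv (hom_id _ FXYZ) (hom_fmor _ (hom_assocC K X Y Z))
                                   Hu Hv Hu' Hv').
  - rewrite !comp_assoc, <- (comp_assoc (f := mminv L X Y ⊗ idm (F Z))) by cods.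
    rewrite <- tnsm_comp, mm_iso2, (comp_idl_hom (hom_id _ _)), tnsm_id by cods.
    rewrite (comp_idl_hom (mm_hom _ _)); apply mm_iso2.
  - rewrite !comp_assoc, <- (comp_assoc (f := mm L X (prd K Y Z))), mm_iso1 by cods.
    rewrite (comp_idl_hom (hom_tnsm _ (hom_id _ _) (mminv_hom _ _))).
    rewrite <- tnsm_comp, mm_iso1, (comp_idl_hom (hom_id _ _)), tnsm_id by cods; reflexivity.
  - rewrite (comp_idl_hom Hv); symmetry; apply mm_assoc.
Qed.

Lemma cmul_coassoc X :
  comp (cmul L X) (idm (F X) ⊗ cmul L X) = comp (cmul L X) (cmul L X ⊗ idm (F X)).
Proof.
  unfold cmul.
  assert (Hl : idm (F X) ⊗ comp (Fm (diag K X)) (mminv L X X)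
               = comp (Fm (idm X) ⊗ Fm (diag K X)) (idm (F X) ⊗ mminv L X X)).
  { rewrite <- tnsm_comp, fmor_id, (comp_idl_hom (hom_id _ _)) by cods; reflexivity. }
  assert (Hr : comp (Fm (diag K X)) (mminv L X X) ⊗ idm (F X)
               = comp (Fm (diag K X) ⊗ Fm (idm X)) (mminv L X X ⊗ idm (F X))).
  { rewrite <- tnsm_comp, fmor_id, (comp_idl_hom (hom_id _ _)) by cods; reflexivity. }
  rewrite Hl, Hr, !comp_assoc by cods.
  rewrite <- !(comp_assoc (f := mminv L X X)) by cods.
  rewrite (mminv_nat (hom_id _ X) (hom_diag K X)), (mminv_nat (hom_diag K X) (hom_id _ X)).
  rewrite !comp_assoc, mminv_assoc by cods.
  rewrite <- !comp_assoc, <- !fmor_comp by cods.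
  rewrite diag_coassoc; reflexivity.
Qed.

Lemma cmul_tnsm_coassoc X A :
  comp (cmul L X ⊗ idm A) (cmul L X ⊗ idm (tns (Lx L) (F X) A))
  = comp (cmul L X ⊗ idm A) (idm (F X) ⊗ (cmul L X ⊗ idm A)).
Proof.
  assert (E := f_equal (fun t => t ⊗ idm A) (cmul_coassoc X)); cbn beta in E.
  rewrite !tnsm_comp_idr, !tnsm_assoc, tnsm_id in E by cods.
  symmetry; exact E.
Qed.

Lemma cmul_tnsm_nat f u X Y A B : hom f X Y -> hom u (tns (Lx L) (F X) A) B ->
  comp (Fm f ⊗ u) (cmul L Y ⊗ idm B)
  = comp (cmul L X ⊗ idm (tns (Lx L) (F X) A)) (Fm f ⊗ Fm f ⊗ u).
Proof.
  intros Hf Hu.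
  rewrite <- !tnsm_comp, (cmul_nat Hf), (comp_idr_hom Hu), (comp_idl_hom Hu) by cods; reflexivity.
Qed.

Lemma cmul_tnsm_counit u X A B : hom u (tns (Lx L) (F X) A) B ->
  comp (cmul L X ⊗ idm A) (wk L X ⊗ u) = u.
Proof.
  intros Hu.
  assert (Hsplit : wk L X ⊗ u = comp (wk L X ⊗ idm (F X) ⊗ idm A) u).
  { transitivity (comp (wk L X ⊗ idm (tns (Lx L) (F X) A)) (idm (one (Lx L)) ⊗ u)).
    - rewrite <- tnsm_comp, (comp_idr_hom (hom_wk X)), (comp_idl_hom Hu) by cods; reflexivity.
    - rewrite tnsm_onel, <- (tnsm_id (Lx L) (F X) A), tnsm_assoc; reflexivity. }
  rewrite Hsplit, <- comp_assoc, <- tnsm_comp_idr, cmul_counit, tnsm_id by cods.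
  apply (comp_idl_hom Hu).
Qed.

Lemma lscomp_id_r p X A Y B : lshom L p X A Y B -> lscomp L A p (lsid L Y B) = p.
Proof.
  destruct p as [f u]; intros [Hf Hu]; cbn [fst snd] in *; unfold lscomp, lsid; cbn [fst snd].
  rewrite (comp_idr_hom Hf), (proj1 Hf), comp_assoc, <- tnsm_comp, (wk_nat Hf) by cods.
  rewrite (comp_idr_hom Hu), (cmul_tnsm_counit _ _ Hu); reflexivity.
Qed.

Lemma lscomp_assoc p q r X A Y B Z C W D :
  lshom L p X A Y B -> lshom L q Y B Z C -> lshom L r Z C W D ->
  lscomp L A (lscomp L A p q) r = lscomp L A p (lscomp L B q r).
Proof.
  destruct p as [f u], q as [g v], r as [k w]; intros [Hf Hu] [Hg Hv] [Hk Hw].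
  cbn [fst snd] in *; unfold lscomp; cbn [fst snd].
  rewrite (dom_comp (hom_cod_dom Hf Hg eq_refl)), (proj1 Hf), (proj1 Hg), comp_assoc by cods.
  f_equal.
  assert (Hsplit : Fm (comp f g) ⊗ comp (comp (cmul L X ⊗ idm A) (Fm f ⊗ u)) v
    = comp (comp (idm (F X) ⊗ (cmul L X ⊗ idm A)) (Fm f ⊗ Fm f ⊗ u)) (Fm g ⊗ v)).
  { rewrite fmor_comp, tnsm_comp by cods; f_equal.
    rewrite tnsm_assoc, <- (tnsm_comp _ (f := idm (F X))), (comp_idl_hom (hom_fmor _ Hf)) by cods.
    reflexivity. }
  rewrite Hsplit, !comp_assoc by cods.
  rewrite <- (comp_assoc (f := cmul L X ⊗ idm A) (g := idm (F X) ⊗ (cmul L X ⊗ idm A)))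
    by cods.
  rewrite <- cmul_tnsm_coassoc, comp_assoc by cods.
  rewrite <- (comp_assoc (f := cmul L X ⊗ idm (tns (Lx L) (F X) A))) by cods.
  rewrite <- (cmul_tnsm_nat A Hf Hu), !comp_assoc by cods; reflexivity.
Qed.

Lemma lscomp_vertical_reindex h u q X Y A B C : hom h X Y -> hom u (tns (Lx L) (F X) A) B ->
  lshom L q Y B Y C ->
  lscomp L A (idm X, u) (reindex L h B q) = (idm X, snd (lscomp L A (h, u) q)).
Proof.
  intros Hh Hu [_ Hq]; unfold lscomp, reindex; cbn [fst snd].
  rewrite (proj1 Hh), dom_idm, (comp_idl_hom (hom_id _ X)), fmor_id; f_equal.
  rewrite !comp_assoc, <- (comp_assoc (f := idm (F X) ⊗ u)) by cods.
  rewrite <- tnsm_comp, (comp_idl_hom (hom_fmor _ Hh)), (comp_idr_hom Hu) by cods; reflexivity.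
Qed.

Lemma lshom_lspair p q X A Y B Z C :
  lshom L p X A Y B -> lshom L q X A Z C ->
  lshom L (lspair L p q) X A (prd K Y Z) (bsum (Lx L) B C).
Proof.
  destruct p as [f u], q as [g v]; intros [Hf Hu] [Hg Hv].
  unfold lspair; split; cbn [fst snd] in *; homs.
Qed.

Lemma lscomp_lspair p q r X A Y B Z C Z' C' :
  lshom L p X A Y B -> lshom L q Y B Z C -> lshom L r Y B Z' C' ->
  lscomp L A p (lspair L q r) = lspair L (lscomp L A p q) (lscomp L A p r).
Proof.
  destruct p as [f u], q as [g v], r as [k w]; intros [Hf Hu] [Hg Hv] [Hk Hw].
  cbn [fst snd] in *; unfold lscomp, lspair; cbn [fst snd].
  rewrite (proj1 Hf); f_equal.
  - apply (comp_pairing K Hf Hg Hk).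
  - eapply (comp_bpair (Lx L) (A := tns (Lx L) (F Y) B)); homs.
Qed.
End Lnl.

Section Gdsc.
Variables (L : lnl) (G : gdsc L).
Local Notation T f := (f, tau G f).
Local Notation K := (Cx L).

Lemma lshom_T f X Y : hom f X Y -> lshom L (T f) X (lam G X) Y (lam G Y).
Proof. intros Hf; split; [exact Hf | destruct Hf as [<- <-]; apply tau_hom]. Qed.

Lemma T_comp f g : cod f = dom g -> T (comp f g) = lscomp L (lam G (dom f)) (T f) (T g).
Proof. intros E; rewrite (tau_comp G E); reflexivity. Qed.

Lemma lshom_phi Y Z :
  lshom L (lspair L (T (pr1 K Y Z)) (T (pr2 K Y Z)))
    (prd K Y Z) (lam G (prd K Y Z)) (prd K Y Z) (bsum (Lx L) (lam G Y) (lam G Z)).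
Proof. apply lshom_lspair; apply lshom_T; homs. Qed.

Lemma T_pairing_phiinv h X Y Z : hom h X (prd K Y Z) ->
  T h = lscomp L (lam G X) (lspair L (T (comp h (pr1 K Y Z))) (T (comp h (pr2 K Y Z))))
          (phiinv G Y Z).
Proof.
  intros Hh.
  rewrite <- (lscomp_id_r (lshom_T Hh)) at 1.
  rewrite <- phi_iso1, <- (lscomp_assoc (lshom_T Hh) (lshom_phi _ _) (phiinv_hom G _ _)).
  rewrite (lscomp_lspair (lshom_T Hh)) by (apply lshom_T; homs).
  rewrite <- (proj1 Hh), <- !T_comp by cods; reflexivity.
Qed.
End Gdsc.

Unset Implicit Arguments.

Theorem proposition4p14 (L : lnl) (G : gdsc L) (f g : mor (Cc L)) :
  dom f = dom g ->
  Dmor G (pairing (Cx L) f g)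
  = lscomp L (lam G (dom f))
      (fpair L (dom f) (Dmor G f) (Dmor G g))
      (reindex L (pairing (Cx L) f g) (bsum (Lx L) (lam G (cod f)) (lam G (cod g)))
         (phiinv G (cod f) (cod g))).
Proof.
  intros Hfg.
  assert (Hf : hom f (dom f) (cod f)) by (split; reflexivity).
  assert (Hg : hom g (dom f) (cod g)) by (split; [symmetry; exact Hfg | reflexivity]).
  assert (Hh := hom_pairing (Cx L) Hf Hg).
  assert (Hu := proj2 (lshom_lspair (lshom_T G Hf) (lshom_T G Hg))).
  assert (HT := T_pairing_phiinv G _ _ Hh).
  rewrite (pairing_pr1_hom _ Hf Hg), (pairing_pr2_hom _ Hf Hg) in HT.
  unfold lspair in Hu, HT; cbn [fst snd] in Hu, HT.
  unfold Dmor, fpair; cbn [snd].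
  rewrite (lscomp_vertical_reindex _ Hh Hu (phiinv_hom G _ _)), <- HT, (proj1 Hh).
  reflexivity.
Qed.
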